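(* Under the assumptions below, the entries of the bidiagonal factors of $\mathscr T_N$ are given by \[ U_{b,n}=-\frac{\tau^B_{b-1,n}\,\tau^B_{b,n+1}}{\tau^B_{b-1,n+1}\,\tau^B_{b,n}},\qquad b\in\{1,\dots,q\},\ n\in\{0,1,\dots,N-b-1\}, \] \[ L_{a,n+1}=-\frac{\tau^A_{a-1,n+2}\,\tau^A_{a,n}}{\tau^A_{a-1,n+1}\,\tau^A_{a,n+1}},\qquad a\in\{1,\dots,p\},\ n\in\{0,1,\dots,N-a-1\}. \]
   Context: Let $p,q\in\mathbb N$ and let $\mu=(\mu_{i,j})$ be a $q\times p$ matrix of measures on $\mathbb R$. For $r,M\in\mathbb N$ let $X^{[M]}_{[r]}(x)$ be the $M\times r$ matrix of monomials whose row $i$ ($i=0,1,\dots,M-1$) is $x^{\lfloor i/r\rfloor}e_{(i \bmod r)+1}^\top$ (i.e. the first $M$ rows of the block column $I_r, xI_r, x^2I_r,\dots$). For $N,M\in\mathbb N$ put $\mathscr M^{[N,M]}=\int X^{[N]}_{[q]}(x)\,\mathrm d\mu(x)\,\big(X^{[M]}_{[p]}(x)\big)^\top$ and $\mathscr M_N=\mathscr M^{[N,N]}$. Assume $\mathscr M_N$ has a Gauss--Borel factorization $\mathscr M_N=\mathscr L_N^{-1}\mathscr U_N^{-1}$ with $\mathscr L_N$ lower unitriangular and $\mathscr U_N$ nonsingular upper triangular. Define the polynomial matrices $B^{[N]}=\mathscr L_N X^{[N]}_{[q]}$ (an $N\times q$ matrix with entries $B^{(j)}_n(x)$, row $n\in\{0,\dots,N-1\}$,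 column $j\in\{1,\dots,q\}$) and $A^{[N]}=\big(X^{[N]}_{[p]}\big)^\top\mathscr U_N$ (a $p\times N$ matrix with entries $A^{(i)}_n(x)$, row $i\in\{1,\dots,p\}$, column $n$). Let $\Lambda^{[N,N+q]}_{[q]}$ be the $N\times(N+q)$ matrix with entries $\delta_{j,i+q}$, and define the banded recursion matrix (with $q$ superdiagonals and $p$ subdiagonals) $\mathscr T_N=\mathscr L_N\Lambda^{[N,N+q]}_{[q]}\mathscr M^{[N+q,N]}\mathscr U_N$. For $r\in\mathbb N$ let $\mathfrak X_{[r,1]}(x)$ be the $r\times r$ matrix whose first $r-1$ rows are $\begin{bmatrix}0_{(r-1)\times1} & I_{r-1}\end{bmatrix}$ and whose last row is $\begin{bmatrix}x&0&\cdots&0\end{bmatrix}$. Define Christoffel-perturbed measures $\mathrm d\mu_{(n,m)}=\mathfrak X_{[q,1]}^n\,\mathrm d\mu\,\big(\mathfrak X_{[p,1]}^m\big)^\top$, their moment matrices $\mathscr M_{N,(n,m)}=\int X^{[N]}_{[q]}\,\mathrm d\mu_{(n,m)}\,(X^{[N]}_{[p]})^\top$, and assume each $\mathscr M_{N,(b,0)}$, $b\in\{1,\dots,q\}$, and $\mathscr M_{N,(0,a)}$, $a\in\{1,\dots,p\}$, admits a Gauss--Borel factorization $\mathscr M_{N,(n,m)}=\mathscr L_{N,(n,m)}^{-1}\mathscr U_{N,(n,m)}^{-1}$ (lower unitriangular / upper triangular). Then $\mathscr T_N=L_1\cdots L_pU_q\cdots U_1$ with $U_b=\mathscr U_{N,(b,0)}^{-1}\mathscr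 U_{N,(b-1,0)}$ upper bidiagonal with diagonal entries $U_{b,0},\dots,U_{b,N-1}$ and all superdiagonal entries equal to $1$, and $L_a=\mathscr L_{N,(0,a-1)}\mathscr L_{N,(0,a)}^{-1}$ lower bidiagonal with unit diagonal and subdiagonal entries $L_{a,1},\dots,L_{a,N-1}$. The $\tau$-determinants are \[ \tau^B_{b,n}=\det\begin{bmatrix}B^{(1)}_n(0)&\cdots&B^{(b)}_n(0)\\ \vdots&&\vdots\\ B^{(1)}_{n+b-1}(0)&\cdots&B^{(b)}_{n+b-1}(0)\end{bmatrix},\qquad \tau^A_{a,n}=\det\begin{bmatrix}A^{(1)}_{n+a-1}(0)&\cdots&A^{(1)}_n(0)\\ \vdots&&\vdots\\ A^{(a)}_{n+a-1}(0)&\cdots&A^{(a)}_n(0)\end{bmatrix}, \] with $\tau^A_{0,n}=\tau^B_{0,n}=1$; their nonvanishing is equivalent to the existence of the transformed orthogonality for $\mathrm d\mu_{(b,0)}$ and $\mathrm d\mu_{(0,a)}$. *)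

From HB Require Import structures.
From mathcomp Require Import all_boot all_order all_algebra.
From mathcomp Require Import all_classical all_reals all_analysis.

Set Implicit Arguments.
Unset Strict Implicit.
Unset Printing Implicit Defensive.

Import Order.TTheory GRing.Theory Num.Theory.
Local Open Scope ring_scope.

Section MOP.
Variable R : realType.

Definition ent (T : zmodType) (m n : nat) (A : 'M[T]_(m, n)) (i j : nat) : T :=
  match (insub i : option 'I_m), (insub j : option 'I_n) with
  | Some i', Some j' => A i' j'
  | _, _ => 0
  end.

Definition Xmon (r M : nat) : 'M[{poly R}]_(M, r) :=
  \matrix_(i < M, j < r) (if (i %% r)%N == j then 'X^(i %/ r) else 0).

Definition Xfrak (r : nat) : 'M[{poly R}]_r :=
  \matrix_(i < r, j < r)
    ((if i.+1 == j :> nat then 1 else 0) +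
     (if (i == r.-1 :> nat) && (j == 0 :> nat) then 'X else 0)).

(* a real signed measure given as mup - mun (two finite positive measures);
   integral of a polynomial against it *)
Definition sint (mup mun : {measure set R -> \bar R}) (P : {poly R}) : R :=
  Rintegral mup setT (fun x => P.[x]) - Rintegral mun setT (fun x => P.[x]).

Definition momM (q p : nat) (mup mun : 'I_q -> 'I_p -> {measure set R -> \bar R})
    (n m N : nat) : 'M[R]_N :=
  let W := Xmon q N *m (Xfrak q ^+ n) in
  let V := Xmon p N *m (Xfrak p ^+ m) in
  \matrix_(i < N, j < N)
    \sum_(c < q) \sum_(d < p) sint (mup c d) (mun c d) (W i c * V j d).

Definition GaussBorel (N : nat) (M L U : 'M[R]_N) : Prop :=
  [/\ (forall i j : 'I_N, (i < j)%N -> L i j = 0),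
      (forall i : 'I_N, L i i = 1),
      (forall i j : 'I_N, (j < i)%N -> U i j = 0),
      U \in unitmx &
      M = invmx L *m invmx U].

Definition Bmat (q N : nat) (L : 'M[R]_N) : 'M[{poly R}]_(N, q) :=
  map_mx polyC L *m Xmon q N.
Definition Amat (p N : nat) (U : 'M[R]_N) : 'M[{poly R}]_(p, N) :=
  (Xmon p N)^T *m map_mx polyC U.

(* tau^B_{b,n}: entry (r,c) = B^{(c+1)}_{n+r}(0) *)
Definition tauB (q N : nat) (L : 'M[R]_N) (b n : nat) : R :=
  \det (\matrix_(r < b, c < b) (ent (Bmat q L) (n + r) c).[0]).
(* tau^A_{a,n}: entry (r,c) = A^{(r+1)}_{n+a-1-c}(0) *)
Definition tauA (p N : nat) (U : 'M[R]_N) (a n : nat) : R :=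
  \det (\matrix_(r < a, c < a) (ent (Amat p U) r (n + (a - 1 - c))).[0]).

Definition Ufactor (N : nat) (UU : nat -> nat -> 'M[R]_N) (b : nat) : 'M[R]_N :=
  invmx (UU b 0%N) *m UU b.-1 0%N.
Definition Lfactor (N : nat) (LL : nat -> nat -> 'M[R]_N) (a : nat) : 'M[R]_N :=
  LL 0%N a.-1 *m invmx (LL 0%N a).

End MOP.

From HB Require Import structures.
From mathcomp Require Import all_boot all_order all_algebra.
From mathcomp Require Import all_classical all_reals all_analysis.
From mathcomp Require Import perm ring zify.
Import Order.TTheory GRing.Theory Num.Theory.
Local Open Scope ring_scope.

Set Implicit Arguments. Unset Strict Implicit. Unset Printing Implicit Defensive.

(* Since L M = U^-1 with L unitriangular, the diagonal entries of U^-1 (the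
   pivots) are ratios of consecutive leading principal minors of M.  The
   Christoffel transforms shift the rows (resp. columns) of the moment matrix,
   so the diagonal of U_b and the subdiagonal of L_a are ratios of row-
   (resp. column-) shifted minors of the moment matrix M.
   Evaluated at 0, tau^B_{b,n} is the minor of L on rows n, ..., n+b-1 and
   columns 0, ..., b-1.  Multiplying the leading (n+b)-block of L by the matrix
   whose first n columns are those of M and whose other columns are unit
   vectors gives a block triangular matrix (because L M is upper triangular),
   whence tau^B_{b,n} = (-1)^(nb) (row-shifted minor) / (leading minor).  The
   same argument applied to U^T M^T = (L^-1)^T gives tau^A_{a,n}, up to the
   sign of a column reversal.  In the quotients of tau's all the extra factors
   cancel, and the signs produce exactly the minus sign. *)

Lemma sum_ord_single (V : nmodType) n (f : 'I_n -> V) (i0 : 'I_n) :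
  (forall k : 'I_n, k != i0 -> f k = 0) -> \sum_(k < n) f k = f i0.
Proof. by move=> f0; rewrite (bigD1 i0) //= big1 ?addr0. Qed.

Section Entries.
Variable T : zmodType.
Implicit Types m n : nat.

Lemma ent_ord m n (A : 'M[T]_(m, n)) (i : 'I_m) (j : 'I_n) : ent A i j = A i j.
Proof. by rewrite /ent !valK. Qed.

Lemma entE m n (A : 'M[T]_(m, n)) i j (hi : (i < m)%N) (hj : (j < n)%N) :
  ent A i j = A (Ordinal hi) (Ordinal hj).
Proof. exact: (ent_ord A (Ordinal hi) (Ordinal hj)). Qed.

Lemma ent_out m n (A : 'M[T]_(m, n)) i j : (m <= i)%N || (n <= j)%N -> ent A i j = 0.
Proof.
rewrite /ent; case/orP => h; first by rewrite insubF // ltnNge h.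
by case: insub => // ?; rewrite insubF // ltnNge h.
Qed.

Lemma ent_tr m n (A : 'M[T]_(m, n)) i j : ent A^T i j = ent A j i.
Proof.
have [/andP[hi hj]|out] := boolP ((i < n) && (j < m))%N.
  by rewrite (entE _ hi hj) (entE _ hj hi) mxE.
by rewrite negb_and -!leqNgt in out; rewrite !ent_out // orbC.
Qed.

Definition lower_mx m n (A : 'M[T]_(m, n)) := forall i j, (i < j)%N -> ent A i j = 0.
Definition upper_mx m n (A : 'M[T]_(m, n)) := forall i j, (j < i)%N -> ent A i j = 0.

Lemma lower_mxP m n (A : 'M[T]_(m, n)) : reflect (lower_mx A) (is_trig_mx A).
Proof.
apply: (iffP is_trig_mxP) => [trigA i j lt_ij | lowA i j lt_ij]; last by rewrite -ent_ord lowA.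
have [hj|] := ltnP j n; last by move=> hj; rewrite ent_out // hj orbT.
have [hi|] := ltnP i m; last by move=> hi; rewrite ent_out // hi.
by rewrite (entE _ hi hj) trigA.
Qed.

Lemma lower_trmx m n (A : 'M[T]_(m, n)) : lower_mx A^T <-> upper_mx A.
Proof. by split=> h i j lt_ij; [rewrite -ent_tr h | rewrite ent_tr h]. Qed.

End Entries.

Section MatrixEntries.
Variable R : comNzRingType.
Implicit Types m n k : nat.

Lemma sum_ord_trunc n k (f : nat -> R) : (k <= n)%N ->
  (forall i, (k <= i < n)%N -> f i = 0) -> \sum_(i < n) f i = \sum_(i < k) f i.
Proof.
move=> le_kn f0; rewrite (big_ord_widen _ _ le_kn) [LHS](bigID (fun i : 'I_n => (i < k)%N)) /=.
by rewrite [X in _ + X]big1 ?addr0 // => i; rewrite -leqNgt => le_ki; rewrite f0 // le_ki /=.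
Qed.

Lemma ent_mul m n r (A : 'M[R]_(m, n)) (B : 'M[R]_(n, r)) i j :
  (i < m)%N -> (j < r)%N -> ent (A *m B) i j = \sum_(k < n) ent A i k * ent B k j.
Proof. by move=> hi hj; rewrite (entE _ hi hj) mxE; apply: eq_bigr => k _; rewrite -!ent_ord. Qed.

Lemma sum_ent_delta m n (A : 'M[R]_(m, n)) i c :
  \sum_(k < n) ent A i k * ((k : nat) == c)%:R = ent A i c.
Proof.
have [hc|hc] := ltnP c n.
  rewrite (sum_ord_single _ (i0 := Ordinal hc)) /= ?eqxx ?mulr1 // => k.
  by rewrite -val_eqE /= => /negbTE->; rewrite mulr0.
rewrite ent_out ?hc ?orbT // big1 // => k _.
by rewrite ltn_eqF ?mulr0 // (leq_trans (ltn_ord k) hc).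
Qed.

Lemma ent_scalar_mx n (a : R) i : (i < n)%N -> ent (a%:M : 'M[R]_n) i i = a.
Proof. by move=> hi; rewrite (entE _ hi hi) mxE eqxx mulr1n. Qed.

Lemma lower_mul_diag n (A B : 'M[R]_n) i : lower_mx A -> lower_mx B ->
  ent (A *m B) i i = ent A i i * ent B i i.
Proof.
move=> lowA lowB; have [hi|hi] := ltnP i n; last by rewrite !ent_out ?hi ?mulr0.
rewrite ent_mul // (sum_ord_single _ (i0 := Ordinal hi)) // => k nki.
case: (ltngtP i k) => [lt_ik|lt_ki|eq_ik]; first by rewrite lowA ?mul0r.
  by rewrite lowB ?mulr0.
by move: nki; rewrite -val_eqE /= eq_ik eqxx.
Qed.

Lemma upper_mul_diag n (A B : 'M[R]_n) i : upper_mx A -> upper_mx B ->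
  ent (A *m B) i i = ent A i i * ent B i i.
Proof.
move=> /lower_trmx lowA /lower_trmx lowB.
by rewrite -ent_tr trmx_mul lower_mul_diag // !ent_tr mulrC.
Qed.

Definition rev_perm n : 'S_n := perm (@rev_ord_inj n).

Lemma det_col_perm n (s : 'S_n) (A : 'M[R]_n) : \det (col_perm s A) = (-1) ^+ s * \det A.
Proof. by rewrite col_permE det_mulmx det_perm odd_permV mulrC. Qed.

Definition lead_minor n (A : 'M[R]_n) k := \det (\matrix_(i < k, j < k) ent A i j).
Definition row_shift_minor n (A : 'M[R]_n) s k := \det (\matrix_(i < k, j < k) ent A (i + s)%N j).

Lemma lead_minor_full n (A : 'M[R]_n) : lead_minor A n = \det A.
Proof. by congr (\det _); apply/matrixP => i j; rewrite mxE ent_ord. Qed.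

Lemma lead_minor_tr n (A : 'M[R]_n) k : lead_minor A^T k = lead_minor A k.
Proof.
by rewrite /lead_minor -det_tr; congr (\det _); apply/matrixP => i j; rewrite !mxE ent_tr.
Qed.

Lemma lead_minor_lower n (A : 'M[R]_n) k : lower_mx A -> lead_minor A k = \prod_(i < k) ent A i i.
Proof.
move=> lowA; rewrite /lead_minor det_trig; first by apply: eq_bigr => i _; rewrite mxE.
by apply/is_trig_mxP => i j lt_ij; rewrite mxE lowA.
Qed.

Lemma lead_minor_upper n (A : 'M[R]_n) k : upper_mx A -> lead_minor A k = \prod_(i < k) ent A i i.
Proof.
move=> /lower_trmx lowA; rewrite -lead_minor_tr lead_minor_lower //.
by apply: eq_bigr => i _; rewrite ent_tr.
Qed.

Lemma lead_minor_mul_lower n (A B : 'M[R]_n) k : (k <= n)%N -> lower_mx A ->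
  lead_minor (A *m B) k = lead_minor A k * lead_minor B k.
Proof.
move=> le_kn lowA; rewrite /lead_minor -det_mulmx; congr (\det _); apply/matrixP => i j.
rewrite !mxE ent_mul ?(leq_trans (ltn_ord _) le_kn) //.
rewrite (sum_ord_trunc (f := fun t => ent A i t * ent B t j) le_kn) => [|t /andP[le_kt _]].
  by apply: eq_bigr => t _; rewrite !mxE.
by rewrite lowA ?mul0r // (leq_trans (ltn_ord i)).
Qed.

Lemma det_unit_tail_cols K b k (f : nat -> nat -> R) : K = (b + k)%N ->
  \det (\matrix_(i < K, j < K) if (j < k)%N then f i j else ((i : nat) == (j - k)%N)%:R) =
  (-1) ^+ (k * b) * \det (\matrix_(i < k, j < k) f (i + b)%N j).
Proof.
elim: b K f => [|b IH] K f ->.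
  rewrite muln0 expr0 mul1r; congr (\det _).
  by apply/matrixP => i j; rewrite !mxE (ltn_ord j) addn0.
have hb : (b < (b + k).+1)%N by rewrite ltnS leq_addr.
rewrite (expand_det_col _ ord_max) (sum_ord_single _ (i0 := Ordinal hb)) => [|i nib]; last first.
  rewrite !mxE /= ltnNge leq_addl /= addnK.
  by move: nib; rewrite -val_eqE /= => /negbTE->; rewrite mul0r.
rewrite !mxE /= ltnNge leq_addl /= addnK eqxx mul1r /cofactor.
have -> : row' (Ordinal hb) (col' ord_max
      (\matrix_(i < (b + k).+1, j < (b + k).+1)
         if (j < k)%N then f i j else ((i : nat) == (j - k)%N)%:R)) =
    \matrix_(i < b + k, j < b + k)
      if (j < k)%N then f (bump b i) j else ((i : nat) == (j - k)%N)%:R.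
  apply/matrixP => i j; rewrite !mxE /= /bump [(b + k <= j)%N]leqNgt ltn_ord add0n.
  case: ifP => // /negbT; rewrite -leqNgt => le_kj.
  have := ltn_ord j; case: (leqP b i) => //= le_bi lt_j; rewrite add1n.
  by rewrite !(introF eqP) //; lia.
rewrite (IH _ (fun i j => f (bump b i) j)) // mulrA -exprD; congr (_ * _); last first.
  by congr (\det _); apply/matrixP => i j; rewrite !mxE /bump leq_addl add1n addnS.
rewrite -signr_odd -(signr_odd _ (k * b.+1)); congr (_ ^+ _).
by rewrite mulnS addnA addnn !oddD odd_double.
Qed.

Lemma det_lower_rows_mul n (A B : 'M[R]_n) k b : (k + b <= n)%N ->
  lower_mx A -> upper_mx (A *m B) ->
  \det (\matrix_(i < b, j < b) ent A (k + i)%N j) * lead_minor (A *m B) k =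
  (-1) ^+ (k * b) * lead_minor A (k + b) * row_shift_minor B b k.
Proof.
move=> le_kbn lowA upAB.
have sumAB i j : (i < k + b)%N -> (j < n)%N ->
    \sum_(t < k + b) ent A i t * ent B t j = ent (A *m B) i j.
  move=> hi hj; rewrite ent_mul ?(leq_trans hi) //.
  rewrite (sum_ord_trunc (f := fun t => ent A i t * ent B t j) le_kbn) // => t /andP[le_t _].
  by rewrite lowA ?mul0r // (leq_trans hi).
have sumA i j : (j < k + b)%N ->
    \sum_(t < k + b) ent A i t * ((t : nat) == j)%:R = ent A i j.
  move=> hj; rewrite (sum_ord_single _ (i0 := Ordinal hj)) /= ?eqxx ?mulr1 // => t.
  by rewrite -val_eqE /= => /negbTE->; rewrite mulr0.
pose G := \matrix_(i < k + b, j < k + b)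
  (if (j < k)%N then ent B i j else ((i : nat) == (j - k)%N)%:R).
have detG : \det G = (-1) ^+ (k * b) * row_shift_minor B b k.
  exact: det_unit_tail_cols (addnC k b).
have AG : (\matrix_(i < k + b, j < k + b) ent A i j) *m G =
    block_mx (\matrix_(i < k, j < k) ent (A *m B) i j) (\matrix_(i < k, j < b) ent A i j)
             0 (\matrix_(i < b, j < b) ent A (k + i)%N j).
  apply/matrixP => i j; rewrite !mxE; under eq_bigr => t _ do rewrite !mxE.
  case: (splitP i) => i' ->; rewrite !mxE; case: (splitP j) => j' ->;
    rewrite !mxE /= ?ltn_ord ?ltnNge ?leq_addr /= ?addKn.
  - by rewrite sumAB //; move: (ltn_ord i') (ltn_ord j') le_kbn; lia.
  - by rewrite sumA //; move: (ltn_ord j'); lia.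
  - by rewrite sumAB ?upAB //; move: (ltn_ord i') (ltn_ord j') le_kbn; lia.
  - by rewrite sumA //; move: (ltn_ord j'); lia.
have := congr1 determinant AG; rewrite det_mulmx det_ublock detG => detAG.
by rewrite mulrC -[LHS]detAG mulrCA mulrA.
Qed.

End MatrixEntries.

Section TriangularInverse.
Variable F : fieldType.

Lemma lower_invmx n (A : 'M[F]_n) : lower_mx A -> lower_mx (invmx A).
Proof.
(* A singular matrix is its own (junk) inverse. *)
move=> lowA; have [unitA|nunitA] := boolP (A \in unitmx); last by rewrite invmx_out.
have diagA i : (i < n)%N -> ent A i i != 0.
  move=> hi; move: unitA; rewrite unitmxE -lead_minor_full lead_minor_lower // unitfE.
  by move/prodf_neq0/(_ (Ordinal hi) isT).
elim/ltn_ind=> i IH j lt_ij.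
have [hj|hj] := ltnP j n; last by rewrite ent_out // hj orbT.
have hi := ltn_trans lt_ij hj.
have : ent (A *m invmx A) i j = 0.
  by rewrite mulmxV // (entE _ hi hj) mxE -val_eqE /= ltn_eqF.
rewrite ent_mul // (sum_ord_single _ (i0 := Ordinal hi)) => [/eqP|k nki].
  by rewrite mulf_eq0 (negbTE (diagA i hi)) => /eqP.
case: (ltngtP k i) => [lt_ki|lt_ik|eq_ki]; first by rewrite IH ?mulr0 // (ltn_trans lt_ki).
  by rewrite lowA ?mul0r.
by move: nki; rewrite -val_eqE /= eq_ki eqxx.
Qed.

Lemma upper_invmx n (A : 'M[F]_n) : upper_mx A -> upper_mx (invmx A).
Proof. by move=> /lower_trmx/lower_invmx; rewrite -trmx_inv => /lower_trmx. Qed.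

End TriangularInverse.

Lemma signed_cross_ratio (F : fieldType) (e1 e2 e3 e4 : nat) (g1 g2 g3 g4 x1 x2 x3 x4 : F) :
  odd (e1 + e2 + e3 + e4) -> g1 * g2 = g3 * g4 -> g3 * g4 != 0 -> x3 * x4 != 0 ->
  - ((-1) ^+ e1 * g1 * x1 * ((-1) ^+ e2 * g2 * x2)) /
    ((-1) ^+ e3 * g3 * x3 * ((-1) ^+ e4 * g4 * x4)) = x1 * x2 / (x3 * x4).
Proof.
move=> odd_e g12 nz_g nz_x.
have sign : (-1) ^+ (e1 + e2) = - (-1) ^+ (e3 + e4) :> F.
  rewrite -signr_odd -(signr_odd _ (e3 + e4)); move: odd_e; rewrite -addnA oddD.
  by case: (odd (e1 + e2)); case: (odd (e3 + e4)); rewrite //= ?opprK ?expr1 ?expr0.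
have -> : (-1) ^+ e1 * g1 * x1 * ((-1) ^+ e2 * g2 * x2) =
          (-1) ^+ (e1 + e2) * (g1 * g2) * (x1 * x2) by rewrite exprD; ring.
have -> : (-1) ^+ e3 * g3 * x3 * ((-1) ^+ e4 * g4 * x4) =
          (-1) ^+ (e3 + e4) * (g3 * g4) * (x3 * x4) by rewrite exprD; ring.
rewrite sign g12; field.
by move: nz_g nz_x; rewrite !mulf_eq0 !negb_or signr_eq0 => /andP[-> ->] /andP[-> ->].
Qed.

Section GaussBorelFactorization.
Variables (R : realType) (N : nat) (M L U : 'M[R]_N).
Hypothesis gbMLU : GaussBorel M L U.

Lemma GaussBorel_lower : lower_mx L.
Proof. by case: gbMLU => lowL _ _ _ _; apply/lower_mxP/is_trig_mxP. Qed.

Lemma GaussBorel_upper : upper_mx U.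
Proof.
case: gbMLU => _ _ upU _ _; apply/lower_trmx/lower_mxP/is_trig_mxP => i j lt_ij.
by rewrite mxE upU.
Qed.

Lemma GaussBorel_diagL i : (i < N)%N -> ent L i i = 1.
Proof. by case: gbMLU => _ diagL _ _ _ hi; rewrite (entE _ hi hi) diagL. Qed.

Lemma GaussBorel_lead_minorL k : (k <= N)%N -> lead_minor L k = 1.
Proof.
move=> le_kN; rewrite (lead_minor_lower k GaussBorel_lower) big1 // => i _.
by rewrite GaussBorel_diagL // (leq_trans (ltn_ord i)).
Qed.

Lemma GaussBorel_unitL : L \in unitmx.
Proof. by rewrite unitmxE -lead_minor_full GaussBorel_lead_minorL // unitr1. Qed.

Lemma GaussBorel_LM : L *m M = invmx U.
Proof. by case: gbMLU => _ _ _ _ ->; rewrite mulmxA mulmxV ?GaussBorel_unitL // mul1mx. Qed.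

Lemma GaussBorel_MU : M *m U = invmx L.
Proof. by case: gbMLU => _ _ _ unitU ->; rewrite -mulmxA mulVmx // mulmx1. Qed.

Lemma GaussBorel_upper_invU : upper_mx (invmx U).
Proof. exact: upper_invmx GaussBorel_upper. Qed.

Lemma GaussBorel_pivots i : (i < N)%N -> ent (invmx U) i i * ent U i i = 1.
Proof.
case: gbMLU => _ _ _ unitU _ hi.
by rewrite -(upper_mul_diag i GaussBorel_upper_invU GaussBorel_upper) mulVmx // ent_scalar_mx.
Qed.

Lemma GaussBorel_lead_minor k : (k <= N)%N -> lead_minor M k = \prod_(i < k) ent (invmx U) i i.
Proof.
move=> le_kN; rewrite -(lead_minor_upper k GaussBorel_upper_invU) -GaussBorel_LM.
by rewrite (lead_minor_mul_lower M le_kN GaussBorel_lower) GaussBorel_lead_minorL // mul1r.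
Qed.

Lemma GaussBorel_pivots_neq0 i : (i < N)%N -> (ent (invmx U) i i != 0) && (ent U i i != 0).
Proof. by move=> hi; rewrite -negb_or -mulf_eq0 GaussBorel_pivots // oner_neq0. Qed.

Lemma GaussBorel_lead_minor_neq0 k : (k <= N)%N -> lead_minor M k != 0.
Proof.
move=> le_kN; rewrite GaussBorel_lead_minor //; apply/prodf_neq0 => i _.
by case/andP: (GaussBorel_pivots_neq0 (leq_trans (ltn_ord i) le_kN)).
Qed.

Lemma GaussBorel_lead_minorU_neq0 k : (k <= N)%N -> lead_minor U k != 0.
Proof.
move=> le_kN; rewrite (lead_minor_upper k GaussBorel_upper); apply/prodf_neq0 => i _.
by case/andP: (GaussBorel_pivots_neq0 (leq_trans (ltn_ord i) le_kN)).
Qed.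

Lemma GaussBorel_pivot_invU k : (k < N)%N -> ent (invmx U) k k = lead_minor M k.+1 / lead_minor M k.
Proof.
move=> hk; rewrite !GaussBorel_lead_minor ?(ltnW hk) // big_ord_recr /= mulrAC mulfV ?mul1r //.
by rewrite -GaussBorel_lead_minor ?GaussBorel_lead_minor_neq0 ?(ltnW hk).
Qed.

Lemma GaussBorel_pivot k : (k < N)%N -> ent U k k = lead_minor M k / lead_minor M k.+1.
Proof.
move=> hk; have := GaussBorel_pivots hk; rewrite GaussBorel_pivot_invU // => pivK.
have nz_k := GaussBorel_lead_minor_neq0 (ltnW hk).
have nz_k1 := GaussBorel_lead_minor_neq0 hk.
by rewrite -[RHS]mulr1 -pivK mulrA -invf_div mulVf ?mul1r // mulf_neq0 ?invr_neq0.
Qed.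

Lemma GaussBorel_lead_minor_invL k : (k <= N)%N -> lead_minor (invmx L) k = 1.
Proof.
move=> le_kN; rewrite (lead_minor_lower k (lower_invmx GaussBorel_lower)) big1 // => i _.
have := lower_mul_diag i GaussBorel_lower (lower_invmx GaussBorel_lower).
rewrite mulmxV ?GaussBorel_unitL // ent_scalar_mx ?(leq_trans (ltn_ord i)) //.
by rewrite GaussBorel_diagL ?(leq_trans (ltn_ord i)) // mul1r => <-.
Qed.

End GaussBorelFactorization.

Section TwoFactorizations.
Variables (R : realType) (N : nat) (M1 L1 U1 M2 L2 U2 : 'M[R]_N).
Hypotheses (gb1 : GaussBorel M1 L1 U1) (gb2 : GaussBorel M2 L2 U2).

Lemma GaussBorel_diag_invU_mul n : (n < N)%N ->
  ent (invmx U2 *m U1) n n =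
  lead_minor M2 n.+1 / lead_minor M2 n * (lead_minor M1 n / lead_minor M1 n.+1).
Proof.
move=> hn; rewrite (upper_mul_diag n (GaussBorel_upper_invU gb2) (GaussBorel_upper gb1)).
by rewrite (GaussBorel_pivot_invU gb2) // (GaussBorel_pivot gb1).
Qed.

Lemma GaussBorel_subdiag_mul_invL n : (n.+1 < N)%N ->
  (forall i k, (k <= n)%N -> ent M2 i k = ent M1 i k.+1) ->
  ent (L1 *m invmx L2) n.+1 n =
  lead_minor M1 n.+2 / lead_minor M1 n.+1 * (lead_minor M2 n / lead_minor M2 n.+1).
Proof.
move=> hn shiftM.
have L1M2 k : (k <= n)%N -> ent (L1 *m M2) n.+1 k = ent (invmx U1) n.+1 k.+1.
  move=> le_kn; have hk : (k.+1 < N)%N by apply: leq_ltn_trans hn.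
  rewrite -(GaussBorel_LM gb1) !ent_mul ?(ltnW hk) //.
  by apply: eq_bigr => l _; rewrite shiftM.
rewrite -(GaussBorel_MU gb2) mulmxA ent_mul ?(ltnW hn) //.
rewrite (sum_ord_single _ (i0 := Ordinal (ltnW hn))) => [|k]; last first.
  rewrite -val_eqE /=; case: (ltngtP k n) => // [lt_kn|lt_nk] _.
    rewrite L1M2 ?(ltnW lt_kn) //.
    by rewrite (GaussBorel_upper_invU gb1 (i := n.+1) (j := k.+1) lt_kn) mul0r.
  by rewrite (GaussBorel_upper gb2 lt_nk) mulr0.
by rewrite L1M2 // (GaussBorel_pivot_invU gb1) // (GaussBorel_pivot gb2) // ltnW.
Qed.

End TwoFactorizations.

Section MomentMatrices.
Variable R : realType.

Definition xmon r i c : {poly R} := if (i %% r == c)%N then 'X^(i %/ r) else 0.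

Lemma xmon_divmod r d s c : (s < r)%N -> xmon r (d * r + s) c = if s == c then 'X^d else 0.
Proof.
move=> lt_sr; rewrite /xmon modnMDl modn_small // divnMDl ?(leq_ltn_trans _ lt_sr) //.
by rewrite divn_small // addn0.
Qed.

Lemma xmonS r m (c : 'I_r) : \sum_(k < r) xmon r m k * Xfrak R r k c = xmon r m.+1 c.
Proof.
have lt_sr : (m %% r < r)%N by rewrite ltn_mod (leq_ltn_trans _ (ltn_ord c)).
rewrite (div.divn_eq m r); move: (m %/ r)%N (m %% r)%N lt_sr => d s lt_sr.
rewrite (sum_ord_single _ (i0 := Ordinal lt_sr)) => [|k]; last first.
  by rewrite -val_eqE xmon_divmod //= eq_sym => /negbTE->; rewrite mul0r.
rewrite xmon_divmod // eqxx mxE /=.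
have [lt_s1r|le_rs1] := ltnP s.+1 r.
  rewrite -addnS xmon_divmod // (_ : (s == r.-1) = false) /= ?addr0; last by apply/eqP; lia.
  by case: eqP => _; rewrite ?mulr1 ?mulr0.
have eq_r : r = s.+1 by apply/eqP; rewrite eqn_leq le_rs1 lt_sr.
subst r; have -> : ((d * s.+1 + s).+1 = d.+1 * s.+1 + 0)%N by rewrite addn0 mulSn addnC.
rewrite xmon_divmod // (gtn_eqF (ltn_ord c)) eqxx add0r [(0 == _)]eq_sym.
by case: eqP => _; rewrite ?mulr0 // -exprSr.
Qed.

Lemma Xmon_Xfrak_exp r N n (i : 'I_N) (c : 'I_r) : (i + n < N)%N ->
  (Xmon R r N *m Xfrak R r ^+ n) i c = xmon r (i + n) c.
Proof.
elim: n c => [|n IH] c lt_iN; first by rewrite expr0 mulmx1 addn0 mxE.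
rewrite exprSr -mulmxE mulmxA mxE addnS -xmonS; apply: eq_bigr => k _.
by rewrite IH //; lia.
Qed.

Lemma momM_shift q p (mup mun : 'I_q -> 'I_p -> {measure set R -> \bar R}) n m N i j :
  (i + n < N)%N -> (j + m < N)%N ->
  ent (momM mup mun n m N) i j = ent (momM mup mun 0 0 N) (i + n) (j + m).
Proof.
move=> hi hj; have hi0 : (i < N)%N by lia.
have hj0 : (j < N)%N by lia.
rewrite (entE _ hi0 hj0) (entE _ hi hj) !mxE; apply: eq_bigr => c _; apply: eq_bigr => d _.
by rewrite !Xmon_Xfrak_exp ?addn0.
Qed.

Lemma horner0_xmon r l c : (c < r)%N -> (xmon r l c).[0] = (l == c)%:R.
Proof.
move=> lt_cr; rewrite /xmon; have [lt_lr|le_rl] := ltnP l r.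
  by rewrite modn_small // divn_small // expr0; case: (l == c); rewrite ?hornerC.
rewrite (gtn_eqF (leq_trans lt_cr le_rl)); case: ifP => _; rewrite ?horner0 //.
by rewrite hornerXn expr0n eqn0Ngt divn_gt0 ?le_rl // (leq_ltn_trans _ lt_cr).
Qed.

Lemma Bmat_horner0 q N (L : 'M[R]_N) i c : (i < N)%N -> (c < q)%N ->
  (ent (Bmat q L) i c).[0] = ent L i c.
Proof.
move=> hi hc; rewrite (entE _ hi hc) mxE horner_sum -sum_ent_delta.
by apply: eq_bigr => l _; rewrite !mxE hornerCM horner0_xmon // -ent_ord.
Qed.

Lemma Amat_horner0 p N (U : 'M[R]_N) r m : (r < p)%N -> (m < N)%N ->
  (ent (Amat p U) r m).[0] = ent U r m.
Proof.
move=> hr hm; rewrite (entE _ hr hm) mxE horner_sum -ent_tr -sum_ent_delta.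
by apply: eq_bigr => l _; rewrite !mxE mulrC hornerCM horner0_xmon // ent_tr -ent_ord.
Qed.

Lemma tauB_lower_minor q N (L : 'M[R]_N) b k : (b <= q)%N -> (k + b <= N)%N ->
  tauB q L b k = \det (\matrix_(i < b, j < b) ent L (k + i)%N j).
Proof.
move=> le_bq le_kbN; congr (\det _); apply/matrixP => i j.
by rewrite !mxE Bmat_horner0 //; move: (ltn_ord i) (ltn_ord j); lia.
Qed.

Lemma tauA_upper_minor p N (U : 'M[R]_N) a k : (a <= p)%N -> (k + a <= N)%N ->
  tauA p U a k = (-1) ^+ rev_perm a * \det (\matrix_(i < a, j < a) ent U^T (k + i)%N j).
Proof.
move=> le_ap le_kaN; rewrite -det_tr -det_col_perm; congr (\det _); apply/matrixP => i j.
rewrite !mxE permE ent_tr Amat_horner0 /= -?subnDA //; move: (ltn_ord i) (ltn_ord j); lia.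
Qed.

Lemma tauB_GaussBorel q N (M L U : 'M[R]_N) b k : GaussBorel M L U ->
  (b <= q)%N -> (k + b <= N)%N ->
  tauB q L b k = (-1) ^+ (k * b) * (lead_minor M k)^-1 * row_shift_minor M b k.
Proof.
move=> gb le_bq le_kbN; have le_kN : (k <= N)%N by lia.
have upLM : upper_mx (L *m M) by rewrite (GaussBorel_LM gb); exact: GaussBorel_upper_invU gb.
have := det_lower_rows_mul le_kbN (GaussBorel_lower gb) upLM.
rewrite (lead_minor_mul_lower M le_kN (GaussBorel_lower gb)) !(GaussBorel_lead_minorL gb) //.
rewrite mul1r mulr1 -(@tauB_lower_minor q N L b k le_bq le_kbN) => tauM.
have nz_k := GaussBorel_lead_minor_neq0 gb le_kN.
by apply: (mulIf nz_k); rewrite tauM; field.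
Qed.

Lemma tauA_GaussBorel p N (M L U : 'M[R]_N) a k : GaussBorel M L U ->
  (a <= p)%N -> (k + a <= N)%N ->
  tauA p U a k =
  (-1) ^+ (k * a) * ((-1) ^+ rev_perm a * lead_minor U (k + a)) * row_shift_minor M^T a k.
Proof.
move=> gb le_ap le_kaN; have le_kN : (k <= N)%N by lia.
have lowUt : lower_mx U^T by apply/lower_trmx; exact: GaussBorel_upper gb.
have upUtMt : upper_mx (U^T *m M^T).
  rewrite -trmx_mul (GaussBorel_MU gb); apply/lower_trmx; rewrite trmxK.
  exact: lower_invmx (GaussBorel_lower gb).
have := det_lower_rows_mul le_kaN lowUt upUtMt.
rewrite -trmx_mul (GaussBorel_MU gb) !lead_minor_tr (GaussBorel_lead_minor_invL gb le_kN) mulr1.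
rewrite tauA_upper_minor // => ->.
by rewrite !mulrA; congr (_ * _ * _); apply: mulrC.
Qed.

Section Christoffel.
Variables (q p N : nat) (mup mun : 'I_q -> 'I_p -> {measure set R -> \bar R}).

Lemma lead_minor_momM_row b t : (t + b <= N)%N ->
  lead_minor (momM mup mun b 0 N) t = row_shift_minor (momM mup mun 0 0 N) b t.
Proof.
move=> le_tbN; congr (\det _); apply/matrixP => i j.
by rewrite !mxE momM_shift ?addn0 //; move: (ltn_ord i) (ltn_ord j); lia.
Qed.

Lemma lead_minor_momM_col a t : (t + a <= N)%N ->
  lead_minor (momM mup mun 0 a N) t = row_shift_minor (momM mup mun 0 0 N)^T a t.
Proof.
move=> le_taN; rewrite /row_shift_minor -det_tr; congr (\det _); apply/matrixP => i j.
by rewrite !mxE ent_tr momM_shift ?addn0 //; move: (ltn_ord i) (ltn_ord j); lia.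
Qed.

Lemma momM_col_succ m i k : (k + m.+1 < N)%N ->
  ent (momM mup mun 0 m.+1 N) i k = ent (momM mup mun 0 m N) i k.+1.
Proof.
move=> hk; have [hi|hi] := ltnP i N; last by rewrite !ent_out ?hi.
by rewrite (momM_shift mup mun (m := m.+1)) ?(momM_shift mup mun (m := m)) ?addn0 ?addSnnS //; lia.
Qed.

Variable (LL UU : nat -> nat -> 'M[R]_N).

Lemma Ufactor_tauB :
  (forall b, (b <= q)%N -> GaussBorel (momM mup mun b 0 N) (LL b 0%N) (UU b 0%N)) ->
  forall b n, (1 <= b <= q)%N -> (n + b < N)%N ->
  ent (Ufactor UU b) n n =
  - (tauB q (LL 0%N 0%N) b.-1 n * tauB q (LL 0%N 0%N) b n.+1)
    / (tauB q (LL 0%N 0%N) b.-1 n.+1 * tauB q (LL 0%N 0%N) b n).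
Proof.
move=> gbB [//|c] n /andP[_ lt_cq] lt_ncN /=.
have gb0 := gbB 0%N isT.
have minor_neq0 b t : (b <= q)%N -> (t + b <= N)%N ->
    row_shift_minor (momM mup mun 0 0 N) b t != 0.
  move=> le_bq le_tbN; rewrite -lead_minor_momM_row //.
  by rewrite (GaussBorel_lead_minor_neq0 (gbB b le_bq)); lia.
rewrite !(tauB_GaussBorel gb0); try lia.
rewrite signed_cross_ratio.
- rewrite /Ufactor (GaussBorel_diag_invU_mul (gbB _ (ltnW lt_cq)) (gbB _ lt_cq)); last lia.
  rewrite !lead_minor_momM_row; try lia.
  by rewrite mulf_div; congr (_ / _); apply: mulrC.
- by rewrite !oddD !oddM /=; case: odd; case: odd.
- by rewrite mulrC.
- by rewrite mulf_neq0 // invr_neq0 // (GaussBorel_lead_minor_neq0 gb0); lia.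
- by rewrite mulf_neq0 // minor_neq0 //; lia.
Qed.

Lemma Lfactor_tauA :
  (forall a, (a <= p)%N -> GaussBorel (momM mup mun 0 a N) (LL 0%N a) (UU 0%N a)) ->
  forall a n, (1 <= a <= p)%N -> (n + a < N)%N ->
  ent (Lfactor LL a) n.+1 n =
  - (tauA p (UU 0%N 0%N) a.-1 n.+2 * tauA p (UU 0%N 0%N) a n)
    / (tauA p (UU 0%N 0%N) a.-1 n.+1 * tauA p (UU 0%N 0%N) a n.+1).
Proof.
move=> gbA [//|c] n /andP[_ lt_cp] lt_ncN /=.
have gb0 := gbA 0%N isT.
have minor_neq0 a t : (a <= p)%N -> (t + a <= N)%N ->
    row_shift_minor (momM mup mun 0 0 N)^T a t != 0.
  move=> le_ap le_taN; rewrite -lead_minor_momM_col //.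
  by rewrite (GaussBorel_lead_minor_neq0 (gbA a le_ap)); lia.
rewrite !(tauA_GaussBorel gb0); try lia.
rewrite signed_cross_ratio.
- rewrite /Lfactor (GaussBorel_subdiag_mul_invL (gbA _ (ltnW lt_cp)) (gbA _ lt_cp)); try lia.
    by rewrite !lead_minor_momM_col ?mulf_div //; lia.
  by move=> i k le_kn; apply: momM_col_succ; lia.
- by rewrite !oddD !oddM /=; case: odd; case: odd.
- (* Generalizing the signs keeps [ring] from normalizing [odd_perm (rev_perm c)]. *)
  rewrite !addnS !addSn; move: ((-1) ^+ rev_perm c) ((-1) ^+ rev_perm c.+1) => sc sc1.
  ring.
- by rewrite !mulf_neq0 ?signr_eq0 ?(GaussBorel_lead_minorU_neq0 gb0) //; lia.
- by rewrite mulf_neq0 // minor_neq0 //; lia.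
Qed.

End Christoffel.

End MomentMatrices.

Unset Implicit Arguments. Set Strict Implicit.

Theorem mainTheorem1 (R : realType) (q p N : nat) (hq : (0 < q)%N) (hp : (0 < p)%N)
  (mup mun : 'I_q -> 'I_p -> {measure set R -> \bar R})
  (hint : forall (c : 'I_q) (d : 'I_p) (k : nat),
      (mup c d).-integrable setT (fun x : R => (x ^+ k)%:E) /\
      (mun c d).-integrable setT (fun x : R => (x ^+ k)%:E))
  (LL UU : nat -> nat -> 'M[R]_N)
  (hfac : forall n m : nat, ((n <= q)%N /\ m = 0%N) \/ (n = 0%N /\ (m <= p)%N) ->
      GaussBorel (momM mup mun n m N) (LL n m) (UU n m)) :
  (forall b n : nat, (1 <= b <= q)%N -> (n + b < N)%N ->
     ent (Ufactor UU b) n n =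
     - (tauB q (LL 0%N 0%N) b.-1 n * tauB q (LL 0%N 0%N) b n.+1)
       / (tauB q (LL 0%N 0%N) b.-1 n.+1 * tauB q (LL 0%N 0%N) b n))
  /\
  (forall a n : nat, (1 <= a <= p)%N -> (n + a < N)%N ->
     ent (Lfactor LL a) n.+1 n =
     - (tauA p (UU 0%N 0%N) a.-1 n.+2 * tauA p (UU 0%N 0%N) a n)
       / (tauA p (UU 0%N 0%N) a.-1 n.+1 * tauA p (UU 0%N 0%N) a n.+1)).
Proof.
split.
- by apply: Ufactor_tauB => b le_bq; apply: hfac; left.
- by apply: Lfactor_tauA => a le_ap; apply: hfac; right.
Qed.
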